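(* Fix an integer $M\ge2$ and constants $T_s,L_{s,d},L_{s,r},L_{r,d}>0$, $\delta\in(0,1]$, $\alpha\in(0,1)$. Put $g_{s,d}=\sin^2(\pi/M)T_sL_{s,d}$, $g_{r,d}=\sin^2(\pi/M)T_sL_{s,r}L_{r,d}$. For $\bar\gamma>0$ set $\bar\gamma_{s,r}=\bar\gamma_{s,d}=\bar\gamma_{r,d}=P_s/N_0=\bar\gamma$, $\bar\gamma^{ID}_{s,r}=T_sL_{s,r}\bar\gamma$, $$\epsilon=\frac{1}{2(1+\bar\gamma^{ID}_{s,r})}\ (M=2),\qquad \epsilon=1.03\sqrt{\tfrac{1+\cos\frac{\pi}{M}}{2\cos\frac{\pi}{M}}}\Big[1-\sqrt{\tfrac{(1-\cos\frac{\pi}{M})\bar\gamma^{ID}_{s,r}}{1+(1-\cos\frac{\pi}{M})\bar\gamma^{ID}_{s,r}}}\Big]\ (M>2),$$ and $\eta=\ln\frac{(1-\epsilon)(M-1)}{\epsilon}$. Define $$a_1=\frac{\sqrt\pi\,(2g_{s,d})^{-1/4}}{4\bar\gamma}\Big(\frac{g_{s,d}}2+\bar\gamma^{-1}\Big)^{-3/4},\quad b_1=\frac14+\frac{\sqrt{g_{s,d}/2+\bar\gamma^{-1}}}{2\sqrt{2g_{s,d}}},$$ $$a_2=\frac{2\bar\gamma}{\delta g_{r,d}(g_{s,d}\bar\gamma+2)\bar\gamma^2},\quad b_2=\frac{\delta g_{r,d}\bar\gamma^2}{2\bar\gamma},$$ $$Z_1=a_1\sqrt{2\eta}\,e^{-2b_1\eta},\quad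 Z_2=\frac{a_2(1-\alpha)}{2\alpha}\ln\Big(1+b_2\frac{2\alpha}{1-\alpha}\Big),\quad Z_3=e^{\eta}Z_1,$$ $$\mathcal P_C=(1-\epsilon)(Z_1+Z_2),\qquad \mathcal P_E=\frac{\epsilon Z_3}{M-1}+\frac{\epsilon}{g_{s,d}\bar\gamma+2}.$$ Then $$\lim_{\bar\gamma\to\infty}\frac{\ln(\mathcal P_C+\mathcal P_E)}{\ln\bar\gamma}=-2,$$ i.e. the diversity order is two.
   Context: $\mathcal P_C+\mathcal P_E$ is the paper's closed-form approximate average symbol error rate of its proposed detector in a three-node SWIPT-enabled differential decode-and-forward relay network with $M$-DPSK where the relay uses time switching with ratio $\alpha$ (relay transmit power $2\delta P_sL_{s,r}|h_{s,r}|^2\alpha/(1-\alpha)$), under Rayleigh fading with all average SNRs equal to $\bar\gamma$ and unit-mean channel gains. *)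

From Stdlib Require Import Reals.
From Coquelicot Require Import Coquelicot.
Open Scope R_scope.

(* Parameters: M (constellation size), Ts, Lsd, Lsr, Lrd, delta, alpha;
   g is the common average SNR \bar\gamma. *)

Definition g_sd (M : nat) (Ts Lsd : R) : R := (sin (PI / INR M))^2 * Ts * Lsd.
Definition g_rd (M : nat) (Ts Lsr Lrd : R) : R :=
  (sin (PI / INR M))^2 * Ts * Lsr * Lrd.

Definition gID (Ts Lsr g : R) : R := Ts * Lsr * g.

Definition eps (M : nat) (Ts Lsr g : R) : R :=
  if (M =? 2)%nat then / (2 * (1 + gID Ts Lsr g))
  else
    let c := cos (PI / INR M) in
    1.03 * sqrt ((1 + c) / (2 * c)) *
    (1 - sqrt ((1 - c) * gID Ts Lsr g / (1 + (1 - c) * gID Ts Lsr g))).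

Definition eta (M : nat) (Ts Lsr g : R) : R :=
  let e := eps M Ts Lsr g in ln ((1 - e) * (INR M - 1) / e).

Definition a1 (M : nat) (Ts Lsd g : R) : R :=
  let gs := g_sd M Ts Lsd in
  sqrt PI * Rpower (2 * gs) (- (1/4)) / (4 * g) * Rpower (gs / 2 + / g) (- (3/4)).

Definition b1 (M : nat) (Ts Lsd g : R) : R :=
  let gs := g_sd M Ts Lsd in
  1/4 + sqrt (gs / 2 + / g) / (2 * sqrt (2 * gs)).

Definition a2 (M : nat) (Ts Lsd Lsr Lrd delta g : R) : R :=
  2 * g / (delta * g_rd M Ts Lsr Lrd * (g_sd M Ts Lsd * g + 2) * g^2).

Definition b2 (M : nat) (Ts Lsr Lrd delta g : R) : R :=
  delta * g_rd M Ts Lsr Lrd * g^2 / (2 * g).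

Definition Z1 (M : nat) (Ts Lsd Lsr g : R) : R :=
  let et := eta M Ts Lsr g in
  a1 M Ts Lsd g * sqrt (2 * et) * exp (- 2 * b1 M Ts Lsd g * et).

Definition Z2 (M : nat) (Ts Lsd Lsr Lrd delta alpha g : R) : R :=
  a2 M Ts Lsd Lsr Lrd delta g * (1 - alpha) / (2 * alpha) *
  ln (1 + b2 M Ts Lsr Lrd delta g * (2 * alpha / (1 - alpha))).

Definition Z3 (M : nat) (Ts Lsd Lsr g : R) : R :=
  exp (eta M Ts Lsr g) * Z1 M Ts Lsd Lsr g.

Definition P_C (M : nat) (Ts Lsd Lsr Lrd delta alpha g : R) : R :=
  (1 - eps M Ts Lsr g) *
  (Z1 M Ts Lsd Lsr g + Z2 M Ts Lsd Lsr Lrd delta alpha g).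

Definition P_E (M : nat) (Ts Lsd Lsr g : R) : R :=
  eps M Ts Lsr g * Z3 M Ts Lsd Lsr g / (INR M - 1) +
  eps M Ts Lsr g / (g_sd M Ts Lsd * g + 2).

Definition SER (M : nat) (Ts Lsd Lsr Lrd delta alpha g : R) : R :=
  P_C M Ts Lsd Lsr Lrd delta alpha g + P_E M Ts Lsd Lsr g.

From Stdlib Require Import Reals Lra Lia.
From Coquelicot Require Import Coquelicot.
Open Scope R_scope.

(* The error rate [SER = P_C + P_E] is squeezed between [k / g^2] and
   [C ln g / g^2] for large average SNR [g]; a general sandwich lemma
   ([log_ratio_limit]) then gives [ln SER / ln g -> -2].

   In the section on
   the error-rate terms, the relay error probability [eps] is shown to behave
   like [1/g], the detection threshold [eta] like [ln g] with [exp (-eta)] of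
   order [eps], and [a1] like [1/g]; from this each of [Z1], [Z2],
   [eps Z3 / (M-1)] and [eps / (gs g + 2)] is [O(ln g / g^2)], while the last
   one is also at least of order [1/g^2]. *)

Notation at_pinf := (Rbar_locally p_infty).

Lemma at_pinf_gt (c : R) : at_pinf (fun g => c < g).
Proof. exists c; auto. Qed.

Lemma at_pinf_ln_ge1 : at_pinf (fun g => 1 <= ln g).
Proof.
  exists (exp 1). intros g Hg.
  rewrite <- (ln_exp 1). apply ln_le; [apply exp_pos | lra].
Qed.

Definition small_ln_pow (n : nat) (f : R -> R) : Prop :=
  exists C, at_pinf (fun g => 0 <= f g <= C * ln g / g ^ n).

Lemma small_ln_pow_plus (n : nat) (f h : R -> R) :
  small_ln_pow n f -> small_ln_pow n h -> small_ln_pow n (fun g => f g + h g).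
Proof.
  intros [C1 H1] [C2 H2]. exists (C1 + C2).
  refine (filter_imp _ _ _ (filter_and _ _ H1 H2)).
  intros g [[Hf0 Hf] [Hh0 Hh]]. split; [lra|].
  replace ((C1 + C2) * ln g / g ^ n) with (C1 * ln g / g ^ n + C2 * ln g / g ^ n)
    by (unfold Rdiv; ring). lra.
Qed.

Lemma small_ln_pow_scale (n : nat) (u f : R -> R) (B : R) :
  at_pinf (fun g => 0 <= u g <= B) -> small_ln_pow n f ->
  small_ln_pow n (fun g => u g * f g).
Proof.
  intros Hu [C Hf]. exists (B * C).
  refine (filter_imp _ _ _ (filter_and _ _ Hu Hf)).
  intros g [[Hu0 HuB] [Hf0 Hfg]]. split; [nra|].
  replace (B * C * ln g / g ^ n) with (B * (C * ln g / g ^ n)) by (unfold Rdiv; ring).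
  apply Rmult_le_compat; lra.
Qed.

Lemma const_div_ln_vanishes (c : R) : is_lim (fun g => c / ln g) p_infty 0.
Proof.
  pose proof (is_lim_scal_l _ c _ _
                (is_lim_inv _ _ _ is_lim_ln_p ltac:(discriminate))) as H.
  simpl in H. rewrite Rmult_0_r in H. exact H.
Qed.

Lemma ln_ln_div_ln_vanishes : is_lim (fun g => ln (ln g) / ln g) p_infty 0.
Proof.
  apply (is_lim_comp (fun y => ln y / y) ln p_infty 0 p_infty).
  - exact is_lim_div_ln_p.
  - exact is_lim_ln_p.
  - exists 0. intros; discriminate.
Qed.

(* Sandwich principle behind a diversity order: if [f] is eventually between
   [k / g^n] and [C ln g / g^n], then [ln f / ln g] lies between
   [-n + ln k / ln g] and [-n + ln C / ln g + ln (ln g) / ln g], so it tends to [-n]. *)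
Lemma log_ratio_limit (n : nat) (f : R -> R) (k : R) :
  0 < k -> at_pinf (fun g => k / g ^ n <= f g) -> small_ln_pow n f ->
  is_lim (fun g => ln (f g) / ln g) p_infty (- INR n).
Proof.
  intros Hk Hlow [C Hup].
  assert (Hlim_low : is_lim (fun g => - INR n + ln k / ln g) p_infty (- INR n)).
  { pose proof (is_lim_plus' _ _ _ _ _ (is_lim_const (- INR n) p_infty)
                  (const_div_ln_vanishes (ln k))) as H.
    rewrite Rplus_0_r in H. exact H. }
  assert (Hlim_up : is_lim (fun g => - INR n + ln C / ln g + ln (ln g) / ln g)
                      p_infty (- INR n)).
  { pose proof (is_lim_plus' _ _ _ _ _ (is_lim_const (- INR n) p_infty)
                  (const_div_ln_vanishes (ln C))) as H.
    rewrite Rplus_0_r in H.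
    pose proof (is_lim_plus' _ _ _ _ _ H ln_ln_div_ln_vanishes) as H'.
    rewrite Rplus_0_r in H'. exact H'. }
  refine (is_lim_le_le_loc _ _ _ _ _ _ Hlim_low Hlim_up).
  pose proof (filter_and _ _ (filter_and _ _ Hlow Hup)
                (filter_and _ _ (at_pinf_gt 1) at_pinf_ln_ge1)) as Hev.
  destruct Hev as [g0 Hg0]. exists g0. intros g Hg.
  destruct (Hg0 g Hg) as [[Hl [_ Hu]] [Hg1 HL]].
  set (L := ln g) in *. set (s := f g) in *.
  assert (Hgn : 0 < g ^ n) by (apply pow_lt; lra).
  assert (Hkg : 0 < k / g ^ n) by (apply Rdiv_lt_0_compat; lra).
  assert (HC : 0 < C).
  { assert (0 < C * L / g ^ n) by lra.
    assert (0 < C * L) by (unfold Rdiv in H; nra). nra. }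
  assert (Hlngn : ln (g ^ n) = INR n * L) by (apply ln_pow; lra).
  assert (Hs_low : ln k - INR n * L <= ln s).
  { rewrite <- Hlngn, <- ln_div by lra. apply ln_le; lra. }
  assert (Hs_up : ln s <= ln C + ln L - INR n * L).
  { rewrite <- Hlngn, <- ln_mult, <- ln_div by (try apply Rmult_lt_0_compat; lra).
    apply ln_le; lra. }
  assert (HiL : 0 < / L) by (apply Rinv_0_lt_compat; lra).
  split.
  - replace (- INR n + ln k / L) with ((ln k - INR n * L) * / L) by (field; lra).
    apply Rmult_le_compat_r; lra.
  - replace (- INR n + ln C / L + ln L / L) with ((ln C + ln L - INR n * L) * / L)
      by (field; lra).
    apply Rmult_le_compat_r; lra.
Qed.

Lemma INR_ge2 (M : nat) : (2 <= M)%nat -> 2 <= INR M.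
Proof. intros H. apply le_INR in H. simpl in H. lra. Qed.

Lemma sin_PI_div_pos (M : nat) : (2 <= M)%nat -> 0 < sin (PI / INR M).
Proof.
  intros HM. pose proof (INR_ge2 M HM). pose proof PI_RGT_0.
  apply sin_gt_0.
  - apply Rdiv_lt_0_compat; lra.
  - apply (Rmult_lt_reg_r (INR M)); [lra|].
    unfold Rdiv. rewrite Rmult_assoc, Rinv_l by lra. nra.
Qed.

(* For [M >= 3] the angle [PI / M] lies in [(0, PI/2)], so its cosine is in [(0,1)]. *)
Lemma cos_PI_div_bounds (M : nat) : (3 <= M)%nat -> 0 < cos (PI / INR M) < 1.
Proof.
  intros HM. apply le_INR in HM. simpl in HM. pose proof PI_RGT_0.
  set (x := PI / INR M).
  assert (Hx0 : 0 < x) by (apply Rdiv_lt_0_compat; lra).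
  assert (Hx1 : x < PI / 2).
  { unfold x. apply (Rmult_lt_reg_r (INR M)); [lra|].
    unfold Rdiv. rewrite Rmult_assoc, Rinv_l by lra. nra. }
  split; [apply cos_gt_0; lra|].
  replace x with (2 * (x / 2)) by field. rewrite cos_2a_sin.
  assert (0 < sin (x / 2)) by (apply sin_gt_0; lra). nra.
Qed.

(* [1 - sqrt (y/(1+y))] behaves like [1/(1+y)] up to a factor 2, since
   [(1 - q)(1 + q) = 1/(1+y)] with [q = sqrt (y/(1+y))] in [[0,1]]. *)
Lemma one_minus_sqrt_ratio_bounds (y : R) : 0 <= y ->
  / (2 * (1 + y)) <= 1 - sqrt (y / (1 + y)) <= / (1 + y).
Proof.
  intros Hy. set (q := sqrt (y / (1 + y))).
  assert (Hq0 : 0 <= q) by apply sqrt_pos.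
  assert (Hq2 : q ^ 2 = y / (1 + y)).
  { apply pow2_sqrt. apply Rmult_le_pos; [lra|]. apply Rlt_le, Rinv_0_lt_compat; lra. }
  assert (Hr : 0 < / (1 + y)) by (apply Rinv_0_lt_compat; lra).
  assert (Hqr : (1 - q) * (1 + q) = / (1 + y)).
  { replace ((1 - q) * (1 + q)) with (1 - q ^ 2) by ring. rewrite Hq2. field. lra. }
  assert (Hq1 : q <= 1) by nra.
  replace (/ (2 * (1 + y))) with (/ (1 + y) / 2) by (field; lra).
  split; nra.
Qed.

Lemma inv_one_plus_bounds (b g : R) : 0 < b -> 1 <= g ->
  / ((1 + b) * g) <= / (1 + b * g) <= / (b * g).
Proof. intros Hb Hg. split; apply Rinv_le_contravar; nra. Qed.

Lemma log_odds_bounds (m e K g : R) :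
  1 <= m -> 0 < e <= 1/2 -> 0 < K -> 0 < g -> K / g <= e ->
  let X := ln ((1 - e) * m / e) in
  0 <= X /\ exp (- X) <= 2 * e /\ X <= ln (m / K) + ln g.
Proof.
  intros Hm He HK Hg HKe X.
  assert (HY : 1 <= (1 - e) * m / e).
  { apply (Rmult_le_reg_r e); [lra|]. unfold Rdiv.
    rewrite Rmult_assoc, Rinv_l, Rmult_1_r by lra. nra. }
  assert (HexpX : exp X = (1 - e) * m / e) by (apply exp_ln; lra).
  repeat split.
  - unfold X. rewrite <- ln_1. apply ln_le; lra.
  - rewrite exp_Ropp, HexpX. apply (Rmult_le_reg_r ((1 - e) * m / e)); [lra|].
    rewrite Rinv_l by lra.
    replace (2 * e * ((1 - e) * m / e)) with (2 * (1 - e) * m) by (field; lra). nra.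
  - unfold X. rewrite <- ln_mult by (try apply Rdiv_lt_0_compat; lra).
    apply ln_le; [lra|].
    assert (Hinv : / e <= g / K).
    { replace (g / K) with (/ (K / g)) by (field; lra).
      apply Rinv_le_contravar; [apply Rdiv_lt_0_compat|]; lra. }
    assert (Hie : 0 < / e) by (apply Rinv_0_lt_compat; lra).
    apply Rle_trans with (m * / e).
    + unfold Rdiv. rewrite Rmult_assoc. nra.
    + replace (m / K * g) with (m * (g / K)) by (field; lra).
      apply Rmult_le_compat_l; lra.
Qed.

Lemma exp_le_compat (x y : R) : x <= y -> exp x <= exp y.
Proof. intros [H | H]; [apply Rlt_le, exp_increasing; exact H | subst; lra]. Qed.

Lemma gaussian_factor_bounds (a b x : R) : 0 <= a -> 1/2 <= b -> 0 <= x ->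
  0 <= a * sqrt (2 * x) * exp (- 2 * b * x) <= a * (1 + x) * exp (- x) /\
  exp x * (a * sqrt (2 * x) * exp (- 2 * b * x)) <= a * (1 + x).
Proof.
  intros Ha Hb Hx.
  set (S := sqrt (2 * x)).
  assert (HS0 : 0 <= S) by apply sqrt_pos.
  assert (HS : S <= 1 + x).
  { assert (S ^ 2 = 2 * x) by (apply pow2_sqrt; lra). nra. }
  assert (Hdecay : exp (- 2 * b * x) <= exp (- x)) by (apply exp_le_compat; nra).
  assert (Hnet : exp x * exp (- 2 * b * x) <= 1).
  { rewrite <- exp_plus, <- exp_0. apply exp_le_compat. nra. }
  pose proof (exp_pos (- 2 * b * x)).
  split; [split|].
  - apply Rmult_le_pos; [apply Rmult_le_pos|]; lra.
  - apply Rmult_le_compat; [apply Rmult_le_pos | | apply Rmult_le_compat_l |]; lra.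
  - replace (exp x * (a * S * exp (- 2 * b * x))) with (a * S * (exp x * exp (- 2 * b * x)))
      by ring.
    apply Rle_trans with (a * S * 1); [apply Rmult_le_compat_l; nra|].
    rewrite Rmult_1_r. apply Rmult_le_compat_l; lra.
Qed.

Lemma ln_one_plus_mult_le (d g : R) : 0 < d -> 1 <= g ->
  ln (1 + d * g) <= ln (1 + d) + ln g.
Proof.
  intros Hd Hg. rewrite <- ln_mult by lra. apply ln_le; nra.
Qed.

Section ErrorRateTerms.

Variables (M : nat) (Ts Lsd Lsr Lrd delta alpha : R).
Hypotheses (HM : (2 <= M)%nat) (HTs : 0 < Ts) (HLsd : 0 < Lsd) (HLsr : 0 < Lsr)
  (HLrd : 0 < Lrd) (Hdelta : 0 < delta) (Halpha : 0 < alpha < 1).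

Lemma g_sd_pos : 0 < g_sd M Ts Lsd.
Proof.
  unfold g_sd. pose proof (pow_lt _ 2 (sin_PI_div_pos M HM)).
  repeat (apply Rmult_lt_0_compat; try lra).
Qed.

Lemma g_rd_pos : 0 < g_rd M Ts Lsr Lrd.
Proof.
  unfold g_rd. pose proof (pow_lt _ 2 (sin_PI_div_pos M HM)).
  repeat (apply Rmult_lt_0_compat; try lra).
Qed.

Lemma eps_affine_bounds : exists k b, 0 < k /\ 0 < b /\
  forall g, 0 < g -> k / 2 / (1 + b * g) <= eps M Ts Lsr g <= k / (1 + b * g).
Proof.
  unfold eps, gID. cbv zeta. destruct (Nat.eqb_spec M 2) as [_ | HM2].
  - exists (1/2), (Ts * Lsr). split; [lra | split; [nra |]].
    intros g Hg.
    assert (Hy : 0 < Ts * Lsr * g) by (repeat apply Rmult_lt_0_compat; lra).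
    replace (/ (2 * (1 + Ts * Lsr * g))) with (1 / 2 / (1 + Ts * Lsr * g)) by (field; lra).
    split; [| lra]. unfold Rdiv.
    apply Rmult_le_compat_r; [apply Rlt_le, Rinv_0_lt_compat|]; lra.
  - destruct (cos_PI_div_bounds M ltac:(lia)) as [Hc0 Hc1].
    set (c := cos (PI / INR M)) in *.
    set (s := sqrt ((1 + c) / (2 * c))).
    assert (Hs : 0 < s) by (apply sqrt_lt_R0, Rdiv_lt_0_compat; lra).
    exists (1.03 * s), ((1 - c) * (Ts * Lsr)).
    split; [lra | split; [apply Rmult_lt_0_compat; nra |]].
    intros g Hg.
    replace ((1 - c) * (Ts * Lsr) * g) with ((1 - c) * (Ts * Lsr * g)) by ring.
    set (y := (1 - c) * (Ts * Lsr * g)).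
    assert (Hy : 0 <= y) by (apply Rmult_le_pos; [| repeat apply Rmult_le_pos]; lra).
    destruct (one_minus_sqrt_ratio_bounds y Hy) as [Hlo Hhi].
    replace (1.03 * s / 2 / (1 + y)) with (1.03 * s * / (2 * (1 + y))) by (field; lra).
    replace (1.03 * s / (1 + y)) with (1.03 * s * / (1 + y)) by (field; lra).
    split; apply Rmult_le_compat_l; lra.
Qed.

Lemma eps_inverse_bounds : exists K1 K2, 0 < K1 /\ 0 < K2 /\
  at_pinf (fun g => K1 / g <= eps M Ts Lsr g <= K2 / g /\ eps M Ts Lsr g <= 1/2).
Proof.
  destruct eps_affine_bounds as (k & b & Hk & Hb & Hbounds).
  exists (k / 2 / (1 + b)), (k / b).
  split; [apply Rdiv_lt_0_compat; lra|]. split; [apply Rdiv_lt_0_compat; lra|].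
  exists (Rmax 1 (2 * (k / b))). intros g Hg.
  pose proof (Rmax_l 1 (2 * (k / b))). pose proof (Rmax_r 1 (2 * (k / b))).
  assert (Hg1 : 1 <= g) by lra.
  assert (HgK : 2 * (k / b) <= g) by lra.
  destruct (Hbounds g ltac:(lra)) as [Hlo Hhi].
  destruct (inv_one_plus_bounds b g Hb Hg1) as [Hinv_lo Hinv_hi].
  assert (Hup : eps M Ts Lsr g <= k / b / g).
  { eapply Rle_trans; [exact Hhi|].
    replace (k / b / g) with (k * / (b * g)) by (field; lra).
    unfold Rdiv. apply Rmult_le_compat_l; lra. }
  repeat split; [| exact Hup |].
  - eapply Rle_trans; [| exact Hlo].
    replace (k / 2 / (1 + b) / g) with (k / 2 * / ((1 + b) * g)) by (field; lra).
    unfold Rdiv at 3. apply Rmult_le_compat_l; lra.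
  - eapply Rle_trans; [exact Hup|].
    assert (Hkb : 0 < k / b) by (apply Rdiv_lt_0_compat; lra).
    apply (Rmult_le_reg_r g); [lra|].
    replace (k / b / g * g) with (k / b) by (field; lra). lra.
Qed.

Lemma eta_bounds : exists B, at_pinf (fun g =>
  0 <= eta M Ts Lsr g /\ exp (- eta M Ts Lsr g) <= 2 * eps M Ts Lsr g /\
  1 + eta M Ts Lsr g <= B * ln g).
Proof.
  destruct eps_inverse_bounds as (K1 & K2 & HK1 & HK2 & Heps).
  pose proof (INR_ge2 M HM) as HM2.
  exists (2 + Rabs (ln ((INR M - 1) / K1))).
  refine (filter_imp _ _ _
            (filter_and _ _ Heps (filter_and _ _ (at_pinf_gt 0) at_pinf_ln_ge1))).
  intros g [[[Hlo _] Hhalf] [Hg HL]].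
  assert (Heps0 : 0 < eps M Ts Lsr g).
  { assert (0 < K1 / g) by (apply Rdiv_lt_0_compat; lra). lra. }
  destruct (log_odds_bounds (INR M - 1) (eps M Ts Lsr g) K1 g
              ltac:(lra) ltac:(lra) HK1 Hg Hlo) as (Het0 & Hexp & Hlog).
  unfold eta. cbv zeta. repeat split; try assumption.
  set (c := ln ((INR M - 1) / K1)) in *.
  pose proof (Rle_abs c). pose proof (Rabs_pos c).
  assert (0 <= Rabs c * (ln g - 1)) by (apply Rmult_le_pos; lra). nra.
Qed.

Lemma a1_bounds : exists A, 0 <= A /\ forall g, 0 < g -> 0 <= a1 M Ts Lsd g <= A / g.
Proof.
  pose proof g_sd_pos as Hgs. unfold a1. cbv zeta.
  set (gs := g_sd M Ts Lsd) in *.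
  set (P := sqrt PI * Rpower (2 * gs) (- (1/4))).
  assert (HP : 0 <= P).
  { apply Rmult_le_pos; [apply sqrt_pos | apply Rlt_le, exp_pos]. }
  exists (P / 4 * Rpower (gs / 2) (- (3/4))).
  split; [apply Rmult_le_pos; [lra | apply Rlt_le, exp_pos] |].
  intros g Hg.
  assert (Hig : 0 < / g) by (apply Rinv_0_lt_compat; lra).
  assert (Hmono : Rpower (gs / 2 + / g) (- (3 / 4)) <= Rpower (gs / 2) (- (3 / 4))).
  { unfold Rpower. apply exp_le_compat.
    assert (ln (gs / 2) <= ln (gs / 2 + / g)) by (apply ln_le; lra). lra. }
  assert (HPg : 0 <= P / (4 * g)).
  { apply Rmult_le_pos; [lra | apply Rlt_le, Rinv_0_lt_compat; lra]. }
  split; [apply Rmult_le_pos; [lra | apply Rlt_le, exp_pos] |].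
  replace (P / 4 * Rpower (gs / 2) (- (3 / 4)) / g)
    with (P / (4 * g) * Rpower (gs / 2) (- (3 / 4))) by (field; lra).
  apply Rmult_le_compat_l; lra.
Qed.

(* The decay rate [b1] is at least [1/2], because [sqrt (gs/2 + 1/g)] is at
   least [sqrt (gs/2) = sqrt (2 gs) / 2]. *)
Lemma b1_ge_half (g : R) : 0 < g -> 1/2 <= b1 M Ts Lsd g.
Proof.
  intros Hg. pose proof g_sd_pos as Hgs. unfold b1. cbv zeta.
  set (gs := g_sd M Ts Lsd) in *.
  set (u := sqrt (gs / 2)).
  assert (Hu : 0 < u) by (apply sqrt_lt_R0; lra).
  assert (Hv : sqrt (2 * gs) = 2 * u).
  { unfold u. replace (2 * gs) with (Rsqr 2 * (gs / 2)) by (unfold Rsqr; field).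
    rewrite sqrt_mult, sqrt_Rsqr by (unfold Rsqr; lra). reflexivity. }
  rewrite Hv.
  assert (Hw : u <= sqrt (gs / 2 + / g)).
  { apply sqrt_le_1_alt. assert (0 < / g) by (apply Rinv_0_lt_compat; lra). lra. }
  assert (Hquarter : 1 / 4 <= sqrt (gs / 2 + / g) / (2 * (2 * u))).
  { replace (1 / 4) with (u / (2 * (2 * u))) by (field; lra).
    unfold Rdiv. apply Rmult_le_compat_r; [apply Rlt_le, Rinv_0_lt_compat; lra | exact Hw]. }
  lra.
Qed.

(* [Z1 = a1 sqrt(2 eta) exp(-2 b1 eta)] is [O(1/g) * O(ln g) * O(eps)]. *)
Lemma Z1_small : small_ln_pow 2 (Z1 M Ts Lsd Lsr).
Proof.
  destruct eps_inverse_bounds as (K1 & K2 & HK1 & HK2 & Heps).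
  destruct eta_bounds as (B & Heta).
  destruct a1_bounds as (A & HA & Ha1).
  exists (A * B * (2 * K2)).
  refine (filter_imp _ _ _ (filter_and _ _ (filter_and _ _ Heps Heta)
                              (filter_and _ _ (at_pinf_gt 0) at_pinf_ln_ge1))).
  intros g [[[[_ Hhi] _] [Het0 [Hexp Hlog]]] [Hg HL]].
  destruct (Ha1 g Hg) as [Ha0 Ha].
  destruct (gaussian_factor_bounds _ _ _ Ha0 (b1_ge_half g Hg) Het0) as [[HZ0 HZ] _].
  unfold Z1. cbv zeta. split; [exact HZ0 |].
  eapply Rle_trans; [exact HZ |].
  replace (A * B * (2 * K2) * ln g / g ^ 2) with (A / g * (B * ln g) * (2 * (K2 / g)))
    by (field; lra).
  pose proof (exp_pos (- eta M Ts Lsr g)).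
  apply Rmult_le_compat; [nra | lra | apply Rmult_le_compat; lra | lra].
Qed.

(* [eps Z3 / (M - 1)] is [O(eps) * O(1/g) * O(ln g)]: the factor [exp eta]
   in [Z3] is absorbed by the Gaussian decay. *)
Lemma PE_Z3_small :
  small_ln_pow 2 (fun g => eps M Ts Lsr g * Z3 M Ts Lsd Lsr g / (INR M - 1)).
Proof.
  destruct eps_inverse_bounds as (K1 & K2 & HK1 & HK2 & Heps).
  destruct eta_bounds as (B & Heta).
  destruct a1_bounds as (A & HA & Ha1).
  pose proof (INR_ge2 M HM) as HM2.
  exists (K2 * A * B).
  refine (filter_imp _ _ _ (filter_and _ _ (filter_and _ _ Heps Heta)
                              (filter_and _ _ (at_pinf_gt 0) at_pinf_ln_ge1))).
  intros g [[[[Hlo Hhi] _] [Het0 [_ Hlog]]] [Hg HL]].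
  assert (Heps0 : 0 < eps M Ts Lsr g).
  { assert (0 < K1 / g) by (apply Rdiv_lt_0_compat; lra). lra. }
  destruct (Ha1 g Hg) as [Ha0 Ha].
  destruct (gaussian_factor_bounds _ _ _ Ha0 (b1_ge_half g Hg) Het0) as [[HZ0 _] HZ3].
  unfold Z3, Z1. cbv zeta.
  set (Z := exp (eta M Ts Lsr g) * _) in *.
  assert (HZ0' : 0 <= Z) by (apply Rmult_le_pos; [apply Rlt_le, exp_pos | exact HZ0]).
  assert (HM1 : 0 < / (INR M - 1) <= 1).
  { split; [apply Rinv_0_lt_compat; lra|]. rewrite <- Rinv_1. apply Rinv_le_contravar; lra. }
  assert (HeZ : 0 <= eps M Ts Lsr g * Z) by (apply Rmult_le_pos; lra).
  unfold Rdiv at 1. split; [apply Rmult_le_pos; lra |].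
  apply Rle_trans with (eps M Ts Lsr g * Z); [nra |].
  replace (K2 * A * B * ln g / g ^ 2) with (K2 / g * (A / g * (B * ln g))) by (field; lra).
  apply Rmult_le_compat; [lra | lra | lra |].
  eapply Rle_trans; [exact HZ3 | apply Rmult_le_compat; lra].
Qed.

Lemma PE_direct_small :
  small_ln_pow 2 (fun g => eps M Ts Lsr g / (g_sd M Ts Lsd * g + 2)).
Proof.
  destruct eps_inverse_bounds as (K1 & K2 & HK1 & HK2 & Heps).
  pose proof g_sd_pos as Hgs.
  exists (K2 / g_sd M Ts Lsd).
  refine (filter_imp _ _ _ (filter_and _ _ Heps
                              (filter_and _ _ (at_pinf_gt 0) at_pinf_ln_ge1))).
  intros g [[[Hlo Hhi] _] [Hg HL]].
  set (gs := g_sd M Ts Lsd) in *.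
  assert (Heps0 : 0 < eps M Ts Lsr g).
  { assert (0 < K1 / g) by (apply Rdiv_lt_0_compat; lra). lra. }
  assert (Hden : 0 < / (gs * g + 2) <= / (gs * g)).
  { split; [apply Rinv_0_lt_compat | apply Rinv_le_contravar]; nra. }
  unfold Rdiv at 1. split; [apply Rmult_le_pos; lra |].
  apply Rle_trans with (K2 / g * / (gs * g)); [apply Rmult_le_compat; lra |].
  replace (K2 / g * / (gs * g)) with (K2 / gs / g ^ 2 * 1) by (field; lra).
  replace (K2 / gs * ln g / g ^ 2) with (K2 / gs / g ^ 2 * ln g) by (field; lra).
  apply Rmult_le_compat_l; [| lra].
  apply Rlt_le, Rdiv_lt_0_compat; [apply Rdiv_lt_0_compat | apply pow_lt]; lra.
Qed.

(* [Z2 = a2 (1-alpha)/(2 alpha) ln (1 + 2 alpha b2 / (1-alpha))]: the prefactor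
   [a2] is [O(1/g^2)] and the argument of the logarithm is linear in [g]. *)
Lemma Z2_small : small_ln_pow 2 (Z2 M Ts Lsd Lsr Lrd delta alpha).
Proof.
  pose proof g_sd_pos as Hgs. pose proof g_rd_pos as Hgr.
  set (gs := g_sd M Ts Lsd) in *. set (gr := g_rd M Ts Lsr Lrd) in *.
  set (d := delta * gr * alpha / (1 - alpha)).
  set (r := (1 - alpha) / (2 * alpha)).
  assert (Hdg : 0 < delta * gr) by (apply Rmult_lt_0_compat; lra).
  assert (Hd : 0 < d) by (apply Rdiv_lt_0_compat; [apply Rmult_lt_0_compat |]; lra).
  assert (Hr : 0 < r) by (apply Rdiv_lt_0_compat; lra).
  assert (Hld : 0 <= ln (1 + d)) by (rewrite <- ln_1; apply ln_le; lra).
  exists (2 / (delta * gr * gs) * r * (1 + ln (1 + d))).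
  refine (filter_imp _ _ _ (filter_and _ _ (at_pinf_gt 1) at_pinf_ln_ge1)).
  intros g [Hg HL].
  assert (Hb2 : b2 M Ts Lsr Lrd delta g * (2 * alpha / (1 - alpha)) = d * g).
  { unfold b2, d. fold gr. field. lra. }
  assert (Ha2 : 0 <= a2 M Ts Lsd Lsr Lrd delta g <= 2 / (delta * gr * gs) / g ^ 2).
  { unfold a2. fold gs gr.
    replace (2 * g / (delta * gr * (gs * g + 2) * g ^ 2))
      with (2 / (delta * gr) * / (g * (gs * g + 2))) by (field; repeat split; nra).
    replace (2 / (delta * gr * gs) / g ^ 2) with (2 / (delta * gr) * / (gs * g * g))
      by (field; repeat split; lra).
    assert (0 < 2 / (delta * gr)) by (apply Rdiv_lt_0_compat; lra).
    assert (0 < gs * g) by nra.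
    split; [apply Rmult_le_pos; [| apply Rlt_le, Rinv_0_lt_compat]; nra |].
    apply Rmult_le_compat_l; [lra | apply Rinv_le_contravar; nra]. }
  assert (Hln : 0 <= ln (1 + d * g) <= (1 + ln (1 + d)) * ln g).
  { split; [rewrite <- ln_1; apply ln_le; nra |].
    pose proof (ln_one_plus_mult_le d g Hd ltac:(lra)). nra. }
  unfold Z2. rewrite Hb2.
  replace (a2 M Ts Lsd Lsr Lrd delta g * (1 - alpha) / (2 * alpha) * ln (1 + d * g))
    with (a2 M Ts Lsd Lsr Lrd delta g * r * ln (1 + d * g)) by (unfold r; field; lra).
  replace (2 / (delta * gr * gs) * r * (1 + ln (1 + d)) * ln g / g ^ 2)
    with (2 / (delta * gr * gs) / g ^ 2 * r * ((1 + ln (1 + d)) * ln g)) by (field; lra).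
  split; [apply Rmult_le_pos; [apply Rmult_le_pos |]; lra |].
  apply Rmult_le_compat; [apply Rmult_le_pos | | apply Rmult_le_compat_r |]; lra.
Qed.

Lemma P_C_small : small_ln_pow 2 (P_C M Ts Lsd Lsr Lrd delta alpha).
Proof.
  destruct eps_inverse_bounds as (K1 & K2 & HK1 & HK2 & Heps).
  apply (small_ln_pow_scale 2 (fun g => 1 - eps M Ts Lsr g)
           (fun g => Z1 M Ts Lsd Lsr g + Z2 M Ts Lsd Lsr Lrd delta alpha g) 1).
  - refine (filter_imp _ _ _ (filter_and _ _ Heps (at_pinf_gt 0))).
    intros g [[[Hlo _] Hhalf] Hg].
    assert (0 < K1 / g) by (apply Rdiv_lt_0_compat; lra). lra.
  - exact (small_ln_pow_plus 2 _ _ Z1_small Z2_small).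
Qed.

Lemma SER_small : small_ln_pow 2 (SER M Ts Lsd Lsr Lrd delta alpha).
Proof.
  exact (small_ln_pow_plus 2 _ _ P_C_small
           (small_ln_pow_plus 2 _ _ PE_Z3_small PE_direct_small)).
Qed.

(* Conversely the error rate is at least of order [1/g^2], already because of
   its last term [eps / (gs g + 2)] with [eps >= K1 / g]. *)
Lemma SER_lower_bound : exists k, 0 < k /\
  at_pinf (fun g => k / g ^ 2 <= SER M Ts Lsd Lsr Lrd delta alpha g).
Proof.
  destruct eps_inverse_bounds as (K1 & K2 & HK1 & HK2 & Heps).
  destruct P_C_small as (C1 & HPC). destruct PE_Z3_small as (C2 & HPE).
  pose proof g_sd_pos as Hgs.
  set (gs := g_sd M Ts Lsd) in *.
  exists (K1 / (gs + 2)). split; [apply Rdiv_lt_0_compat; lra |].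
  refine (filter_imp _ _ _ (filter_and _ _ (filter_and _ _ Heps (at_pinf_gt 1))
                              (filter_and _ _ HPC HPE))).
  intros g [[[[Hlo _] _] Hg] [[HPC0 _] [HPE0 _]]].
  unfold SER, P_E. fold gs.
  assert (Hlast : K1 / (gs + 2) / g ^ 2 <= eps M Ts Lsr g / (gs * g + 2)).
  { replace (K1 / (gs + 2) / g ^ 2) with (K1 / g * / ((gs + 2) * g)) by (field; lra).
    unfold Rdiv at 2. apply Rmult_le_compat; try lra.
    - apply Rlt_le, Rdiv_lt_0_compat; lra.
    - apply Rlt_le, Rinv_0_lt_compat; nra.
    - apply Rinv_le_contravar; nra. }
  lra.
Qed.

End ErrorRateTerms.

Theorem mainTheorem4 (M : nat) (Ts Lsd Lsr Lrd delta alpha : R) :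
  (2 <= M)%nat ->
  0 < Ts -> 0 < Lsd -> 0 < Lsr -> 0 < Lrd ->
  0 < delta <= 1 -> 0 < alpha < 1 ->
  is_lim (fun g => ln (SER M Ts Lsd Lsr Lrd delta alpha g) / ln g)
    p_infty (-2).
Proof.
  intros HM HTs HLsd HLsr HLrd [Hdelta _] Halpha.
  destruct (SER_lower_bound M Ts Lsd Lsr Lrd delta alpha
              HM HTs HLsd HLsr HLrd Hdelta Halpha) as (k & Hk & Hlow).
  pose proof (SER_small M Ts Lsd Lsr Lrd delta alpha
                HM HTs HLsd HLsr HLrd Hdelta Halpha) as Hup.
  replace (-2) with (- INR 2) by (simpl; ring).
  exact (log_ratio_limit 2 _ k Hk Hlow Hup).
Qed.
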